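(* Let $G$ be a graph that contains an induced subgraph $T$ isomorphic to the path $P_3$ on three vertices or to the triangle $C_3$, such that every vertex of $T$ has degree exactly $3$ in $G$. If $\chi_c^{\star}(G\setminus T)\leq 4$, then $\chi_c^{\star}(G)\leq 4$.
   Context: All graphs are finite and simple. $G\setminus T$ denotes the subgraph of $G$ induced by the vertices not in $T$. A correspondence-cover of a graph $G$ is a pair $(L,H)$ where $H$ is a graph and $L$ maps each $v\in V(G)$ to a subset $L(v)\subseteq V(H)$ such that: the sets $L(v)$ partition $V(H)$; each $L(v)$ induces a clique in $H$; if $uv\notin E(G)$ there are no edges of $H$ between $L(u)$ and $L(v)$; if $uv\in E(G)$ the edges of $H$ between $L(u)$ and $L(v)$ form a matching. The cover is $k$-fold if $|L(v)|=k$ for all $v$. An independent transversal of $(L,H)$ is an independent set of $H$ containing exactly one vertex of each $L(v)$. A $k$-fold cover has a packing if it has $k$ pairwise vertex-disjoint independent transversals. $\chi_c^{\star}(G)$ is the least $k\geq 1$ such that every $k$-fold correspondence-cover of $G$ has a packing. *)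

From mathcomp Require Import all_boot.
Set Implicit Arguments. Unset Strict Implicit. Unset Printing Implicit Defensive.

Definition simple_graph (V : finType) (e : rel V) : Prop :=
  symmetric e /\ irreflexive e.

Definition is_cover (V : finType) (e : rel V) (W : finType) (h : rel W)
    (L : V -> {set W}) : Prop :=
  [/\ simple_graph h,
      ((forall w : W, exists v : V, w \in L v) /\
       (forall u v : V, u != v -> [disjoint L u & L v])),
      (forall (v : V) (x y : W), x \in L v -> y \in L v -> x != y -> h x y),
      (forall (u v : V) (x y : W), u != v -> ~~ e u v ->
          x \in L u -> y \in L v -> ~~ h x y)
    &
      (forall (u v : V) (x : W), e u v -> x \in L u ->
          #|[set y in L v | h x y]| <= 1)].

Definition kfold (V W : finType) (L : V -> {set W}) (k : nat) : Prop :=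
  forall v, #|L v| = k.

Definition indep_transversal (V W : finType) (h : rel W) (L : V -> {set W})
    (I : {set W}) : Prop :=
  (forall x y, x \in I -> y \in I -> ~~ h x y) /\
  (forall v, #|I :&: L v| = 1).

Definition has_packing (V W : finType) (h : rel W) (L : V -> {set W})
    (k : nat) : Prop :=
  exists t : 'I_k -> {set W},
    (forall i, indep_transversal h L (t i)) /\
    (forall i j, i != j -> [disjoint t i & t j]).

Definition every_cover_packs (V : finType) (e : rel V) (k : nat) : Prop :=
  forall (W : finType) (h : rel W) (L : V -> {set W}),
    is_cover e h L -> kfold L k -> has_packing h L k.

(* chi_c^star(G) <= k : the least j >= 1 such that every j-fold cover has a
   packing exists and is <= k, i.e. some such j in [1, k] exists. *)
Definition chi_c_star_le (V : finType) (e : rel V) (k : nat) : Prop :=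
  exists2 j : nat, 0 < j <= k & every_cover_packs e j.

Definition del_vert (V : finType) (T : {set V}) := {x : V | x \notin T}.
Definition del_rel (V : finType) (e : rel V) (T : {set V}) : rel (del_vert T) :=
  fun x y => e (val x) (val y).
Arguments del_rel {V} e T.

From mathcomp Require Import all_boot fingroup perm.
Set Implicit Arguments. Unset Strict Implicit. Unset Printing Implicit Defensive.

(* Packability is monotone in the number of colours, so restricting a 4-fold cover of G
   to G \ T gives four disjoint independent transversals of G \ T.  Identify each list
   L x, x in T, with 'I_4: extending the packing over T means choosing for every x in T a
   bijection sg x from the colours of x to the four transversals.  An outer neighbour of x
   only forbids a partial matching between colours and transversals, i.e. agreement of
   sg x with a fixed permutation; an edge xy of T forbids agreement of sg x with sg y
   composed with a fixed permutation.  As the vertices of T have degree 3, an end of a path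
   T has at most two outer neighbours and every other vertex of T at most one.  Relabelling
   absorbs the edges ab, bc and the constraint at b, and an exhaustive search in S_4 shows
   that the remaining constraints can always be met. *)

(** * Discordant permutations and partial injections *)

Definition discordant (T : finType) (s t : {perm T}) := [forall x, s x != t x].

Section Discordant.
Variable T : finType.
Local Open Scope group_scope.
Implicit Types s t u : {perm T}.

Lemma discordantC s t : discordant s t = discordant t s.
Proof. by apply/forallP/forallP => H x; rewrite eq_sym. Qed.

Lemma discordant_mulr s t u : discordant (s * u) (t * u) = discordant s t.
Proof. by apply/forallP/forallP => H x; have := H x; rewrite !permM (inj_eq perm_inj). Qed.

Lemma discordant_mull s t u : discordant (u * s) (u * t) = discordant s t.
Proof.
apply/forallP/forallP => H x; last by rewrite !permM.
by have := H (u^-1 x); rewrite !permM permKV.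
Qed.

Lemma discordant_mulE s t u v : discordant (u * s * v) t = discordant s (u^-1 * t * v^-1).
Proof.
have {1}-> : t = u * (u^-1 * t * v^-1) * v by rewrite mulgA mulVKg mulgKV.
by rewrite discordant_mulr discordant_mull.
Qed.

End Discordant.

Definition partial_injection (T : eqType) (R : rel T) :=
  (forall x y y', R x y -> R x y' -> y = y') /\ (forall x x' y, R x y -> R x' y -> x = x').

Section PartialInjection.
Variable T : finType.
Local Open Scope group_scope.

Lemma total_injection_perm (R : rel T) : partial_injection R -> (forall x, exists y, R x y) ->
  exists s : {perm T}, forall x y, R x y -> s x = y.
Proof.
move=> [Rfun Rinj] Rtot.
pose f x := odflt x [pick y | R x y].
have Rf x : R x (f x).
  by rewrite /f; case: pickP => [//|none]; have [y] := Rtot x; rewrite none.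
have f_inj : injective f by move=> x x' E; apply: (Rinj _ _ (f x)); rewrite // E.
by exists (perm f_inj) => x y Rxy; rewrite permE (Rfun _ _ _ (Rf x) Rxy).
Qed.

Lemma partial_injection_unmatched (R : rel T) x0 : partial_injection R -> (forall y, ~~ R x0 y) ->
  exists y0, forall x, ~~ R x y0.
Proof.
move=> [Rfun Rinj] free.
have [y0 /forallP unm|matched] := pickP [pred y | [forall x, ~~ R x y]]; first by exists y0.
have {}matched y : exists x, R x y.
  by have /negbT := matched y; rewrite negb_forall => /existsP[x]; rewrite negbK; exists x.
have [pre Rpre] : exists s : {perm T}, forall y x, R x y -> s y = x.
  by apply: total_injection_perm => //; split=> [y x x' /Rinj|y y' x /Rfun]; apply.
have [x Rx] := matched (pre^-1 x0).
have x_x0 : x = x0 by rewrite -(Rpre _ _ Rx) permKV.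
by move: Rx; rewrite x_x0 (negbTE (free _)).
Qed.

Lemma partial_injection_add (R : rel T) x0 y0 : partial_injection R ->
  (forall y, ~~ R x0 y) -> (forall x, ~~ R x y0) ->
  partial_injection (fun x y => R x y || (x == x0) && (y == y0)).
Proof.
move=> [Rfun Rinj] free0 unm; split=> [x y y'|x x' y].
  case: (eqVneq x x0) => [->|_]; rewrite ?(negbTE (free0 _)) ?andbF ?orbF /=.
    by move=> /eqP-> /eqP->.
  exact: Rfun.
case: (eqVneq y y0) => [->|_]; rewrite ?(negbTE (unm _)) ?andbT ?andbF ?orbF /=.
  by move=> /eqP-> /eqP->.
exact: Rinj.
Qed.

Lemma partial_injection_extends (R : rel T) : partial_injection R ->
  exists s : {perm T}, forall x y, R x y -> s x = y.
Proof.
move: {2}#|_| (leqnn #|[set x | [forall y, ~~ R x y]]|) => n.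
elim: n R => [|n IH] R free_le Rpi.
  apply: total_injection_perm => // x; move: free_le; rewrite leqn0 cards_eq0 => /eqP/setP/(_ x).
  by rewrite !inE => /negbT; rewrite negb_forall => /existsP[y]; rewrite negbK; exists y.
have [x0 free0|none] := pickP [pred x | [forall y, ~~ R x y]]; last first.
  apply: (IH R) => //; rewrite (_ : [set x | _] = set0) ?cards0 //.
  by apply/setP => x; rewrite !inE; exact: none.
have [y0 unm] := partial_injection_unmatched Rpi (forallP free0).
pose R' x y := R x y || (x == x0) && (y == y0).
have free_le' : #|[set x | [forall y, ~~ R' x y]]| <= n.
  have free0' : [forall y, ~~ R x0 y] := free0.
  move: free_le; rewrite (cardsD1 x0) inE free0' add1n ltnS; apply: leq_trans.
  apply: subset_leq_card; apply/subsetP => x; rewrite !inE => /forallP free'.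
  apply/andP; split.
    by apply/eqP => x_x0; move: (free' y0); rewrite /R' x_x0 !eqxx orbT.
  by apply/forallP => y; apply: contra (free' y) => Rxy; rewrite /R' Rxy.
have [s Hs] := IH R' free_le' (partial_injection_add Rpi (forallP free0) unm).
by exists s => x y Rxy; apply: Hs; rewrite /R' Rxy.
Qed.

End PartialInjection.

Definition perm_extension (T : finType) (R : rel T) : {perm T} :=
  odflt 1%g [pick s : {perm T} | [forall x, forall y, R x y ==> (s x == y)]].

Lemma perm_extensionE (T : finType) (R : rel T) x y :
  partial_injection R -> R x y -> perm_extension R x = y.
Proof.
move=> /partial_injection_extends[s Hs] Rxy; rewrite /perm_extension.
case: pickP => [s' /forallP/(_ x)/forallP/(_ y)/implyP/(_ Rxy)/eqP //|].
by move=> /(_ s)/negbT/forallPn[x' /forallPn[y']]; rewrite negb_imply => /andP[/Hs-> /eqP].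
Qed.

(** * An exhaustive check in S_4 *)

Definition perm_seq (s : 'S_4) : seq nat := [seq val (s i) | i <- enum 'I_4].

Definition seq_discordant (s t : seq nat) := all (fun i => nth 0 s i != nth 0 t i) (iota 0 4).

Definition seq_comp (s t : seq nat) := [seq nth 0 t i | i <- s].

(* The order is that of [permutations (iota 0 4)]; the list is written out so that
   [vm_compute] does not recompute it at every use. *)
Definition S4_seqs : seq (seq nat) :=
  [:: [:: 1; 2; 0; 3]; [:: 2; 1; 0; 3]; [:: 0; 2; 1; 3]; [:: 2; 0; 1; 3]; [:: 1; 0; 2; 3];
      [:: 0; 1; 2; 3]; [:: 1; 3; 0; 2]; [:: 3; 1; 0; 2]; [:: 0; 3; 1; 2]; [:: 3; 0; 1; 2];
      [:: 1; 0; 3; 2]; [:: 0; 1; 3; 2]; [:: 3; 2; 0; 1]; [:: 2; 3; 0; 1]; [:: 0; 2; 3; 1];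
      [:: 2; 0; 3; 1]; [:: 3; 0; 2; 1]; [:: 0; 3; 2; 1]; [:: 2; 1; 3; 0]; [:: 1; 2; 3; 0];
      [:: 3; 1; 2; 0]; [:: 1; 3; 2; 0]; [:: 2; 3; 1; 0]; [:: 3; 2; 1; 0]].

Lemma S4_seqsE : S4_seqs = permutations (iota 0 4).
Proof. by vm_compute. Qed.

Definition derangement_seqs := [seq s <- S4_seqs | seq_discordant s (iota 0 4)].

Lemma nth_perm_seq s (i : 'I_4) : nth 0 (perm_seq s) i = s i.
Proof. by rewrite (nth_map i) ?size_enum_ord // nth_ord_enum. Qed.

Lemma perm_seq1 : perm_seq 1 = iota 0 4.
Proof. by rewrite -val_enum_ord; apply: eq_map => i; rewrite perm1. Qed.

Lemma perm_seq_mul s t : perm_seq (s * t)%g = seq_comp (perm_seq s) (perm_seq t).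
Proof. by rewrite /seq_comp -map_comp; apply: eq_map => i /=; rewrite nth_perm_seq permM. Qed.

Lemma mem_perm_seq s : perm_seq s \in S4_seqs.
Proof.
rewrite S4_seqsE mem_permutations -val_enum_ord /perm_seq (map_comp val s); apply: perm_map.
apply: uniq_perm; rewrite ?(map_inj_uniq perm_inj) ?enum_uniq // => i.
by rewrite mem_enum -[i](permKV s) map_f ?mem_enum.
Qed.

Lemma perm_seq_onto c : c \in S4_seqs -> exists s, perm_seq s = c.
Proof.
rewrite S4_seqsE mem_permutations => pc.
have size_c : size c = 4 by rewrite (perm_size pc) size_iota.
have lt_c (i : 'I_4) : nth 0 c i < 4.
  have : nth 0 c i \in c by rewrite mem_nth ?size_c.
  by rewrite (perm_mem pc) mem_iota.
have f_inj : injective (fun i : 'I_4 => inord (nth 0 c i) : 'I_4).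
  move=> i j /(congr1 val) /=; rewrite !inordK // => /eqP.
  by rewrite nth_uniq ?size_c // ?(perm_uniq pc) ?iota_uniq // => /eqP/val_inj.
exists (perm f_inj); apply: (@eq_from_nth _ 0) => [|i];
  rewrite size_map size_enum_ord ?size_c // => i4.
by rewrite (nth_perm_seq _ (Ordinal i4)) permE /= inordK // (lt_c (Ordinal i4)).
Qed.

Lemma discordant_perm_seq s t : discordant s t = seq_discordant (perm_seq s) (perm_seq t).
Proof.
apply/forallP/allP => [H i|H i]; last by have := H i; rewrite mem_iota /= !nth_perm_seq; apply.
by rewrite mem_iota => /andP[_ i4]; rewrite !(nth_perm_seq _ (Ordinal i4)); apply: H.
Qed.

Lemma has_predI_count (T : Type) (a1 a2 : pred T) (s : seq T) :
  size s < count a1 s + count a2 s -> has (predI a1 a2) s.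
Proof.
move=> lt; rewrite has_count lt0n; apply: contraTneq lt => none.
by rewrite -leqNgt -count_predUI none addn0 count_size.
Qed.

(* For all f1 f2, at least five of the nine derangements b admit an a discordant with
   f1, f2 and b; as 5 + 5 > 9, the two ends of a path can share such a b. *)
Lemma seq_path_count : all (fun f1 => all (fun f2 =>
  5 <= count (fun b => has (fun a =>
         [&& seq_discordant a f1, seq_discordant a f2 & seq_discordant a b]) S4_seqs)
       derangement_seqs) S4_seqs) S4_seqs.
Proof. by vm_compute. Qed.

Lemma seq_triangle_check : all (fun f => all (fun g => all (fun m =>
  has (fun b =>
    let A := [seq a <- S4_seqs | seq_discordant a f && seq_discordant a b] in
    let C := [seq c <- S4_seqs | seq_discordant c g && seq_discordant c b] in
    has (fun a => has (fun c => seq_discordant a (seq_comp m c)) C) A)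
  derangement_seqs) S4_seqs) S4_seqs) S4_seqs.
Proof. by vm_compute. Qed.

Section S4Core.
Local Open Scope group_scope.

Lemma S4_path_normal (f1 f2 h1 h2 : 'S_4) : exists alpha beta gamma : 'S_4,
  [&& discordant beta 1, discordant alpha f1, discordant alpha f2, discordant alpha beta,
      discordant gamma h1, discordant gamma h2 & discordant gamma beta].
Proof.
have count5 f f' := allP (allP seq_path_count _ (mem_perm_seq f)) _ (mem_perm_seq f').
have /hasP[b] := has_predI_count (leq_add (count5 f1 f2) (count5 h1 h2)).
rewrite mem_filter => /andP[der bS4] /andP[/hasP[a aS4 Ha] /hasP[c cS4 Hc]].
have [[alpha Ea] [beta Eb]] := (perm_seq_onto aS4, perm_seq_onto bS4).
have [gamma Ec] := perm_seq_onto cS4.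
exists alpha, beta, gamma; rewrite !discordant_perm_seq perm_seq1 Ea Eb Ec der.
by move: Ha Hc => /and3P[-> -> ->] /and3P[-> -> ->].
Qed.


Lemma S4_triangle_normal (f h mu : 'S_4) : exists alpha beta gamma : 'S_4,
  [&& discordant beta 1, discordant alpha f, discordant alpha beta,
      discordant gamma h, discordant gamma beta & discordant alpha (mu * gamma)].
Proof.
have := allP (allP (allP seq_triangle_check _ (mem_perm_seq f)) _ (mem_perm_seq h)) _
  (mem_perm_seq mu).
case/hasP=> b; rewrite mem_filter => /andP[der bS4] /hasP[a].
rewrite mem_filter => /andP[/andP[Haf Hab] aS4] /hasP[c].
rewrite mem_filter => /andP[/andP[Hch Hcb] cS4] Hac.
have [[alpha Ea] [beta Eb]] := (perm_seq_onto aS4, perm_seq_onto bS4).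
have [gamma Ec] := perm_seq_onto cS4.
exists alpha, beta, gamma; rewrite !discordant_perm_seq perm_seq1 perm_seq_mul.
by rewrite Ea Eb Ec der Haf Hab Hch Hcb Hac.
Qed.

Lemma seq_le2_sub (T : eqType) (x0 : T) (s : seq T) :
  size s <= 2 -> exists x y, {subset s <= [:: x; y]}.
Proof.
case: s => [|x [|y []]] // _; [exists x0, x0 | exists x, x | exists x, y] => //.
by move=> z; rewrite !inE orbb.
Qed.

Lemma seq_le1_sub (T : eqType) (x0 : T) (s : seq T) :
  size s <= 1 -> exists x, {subset s <= [:: x]}.
Proof. by case: s => [|x []] // _; [exists x0 | exists x]. Qed.

Lemma S4_path (Fa Fb Fc : seq 'S_4) (r s : 'S_4) :
  size Fa <= 2 -> size Fb <= 1 -> size Fc <= 2 ->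
  exists sa sb sc : 'S_4, [/\ all (discordant sa) Fa, all (discordant sb) Fb,
    all (discordant sc) Fc, discordant sa (r * sb) & discordant sb (s * sc)].
Proof.
(* With sa = r alpha g, sb = beta g and sc = s^-1 gamma g (products act left to right,
   see permM) the constraints become those of S4_path_normal. *)
move=> /(seq_le2_sub 1)[f1 [f2 subFa]] /(seq_le1_sub 1)[g subFb] /(seq_le2_sub 1)[h1 [h2 subFc]].
have [alpha [beta [gamma]]] := S4_path_normal (r^-1 * f1 * g^-1) (r^-1 * f2 * g^-1)
  (s * h1 * g^-1) (s * h2 * g^-1).
case/and4P=> der Ha1 Ha2 /and4P[Hab Hc1 Hc2 Hcb].
exists (r * alpha * g), (beta * g), (s^-1 * gamma * g); split.
- by apply/allP=> f /subFa; rewrite !inE => /orP[]/eqP->; rewrite discordant_mulE.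
- by apply/allP=> f /subFb; rewrite inE => /eqP->; rewrite -{2}[g]mul1g discordant_mulr.
- by apply/allP=> f /subFc; rewrite !inE => /orP[]/eqP->; rewrite discordant_mulE invgK.
- by rewrite mulgA discordant_mulr discordant_mull.
- by rewrite !mulgA mulgV mul1g discordant_mulr discordantC.
Qed.

Lemma S4_triangle (Fa Fb Fc : seq 'S_4) (r s t : 'S_4) :
  size Fa <= 1 -> size Fb <= 1 -> size Fc <= 1 ->
  exists sa sb sc : 'S_4, [/\ all (discordant sa) Fa, all (discordant sb) Fb,
    all (discordant sc) Fc, discordant sa (r * sb) &
    discordant sb (s * sc) /\ discordant sa (t * sc)].
Proof.
(* The substitution of S4_path, with mu = r^-1 * t * s^-1 for the third edge. *)
move=> /(seq_le1_sub 1)[f subFa] /(seq_le1_sub 1)[g subFb] /(seq_le1_sub 1)[h subFc].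
have [alpha [beta [gamma]]] :=
  S4_triangle_normal (r^-1 * f * g^-1) (s * h * g^-1) (r^-1 * t * s^-1).
case/and3P=> der Haf /and4P[Hab Hch Hcb Hac].
exists (r * alpha * g), (beta * g), (s^-1 * gamma * g); split; last split.
- by apply/allP=> f' /subFa; rewrite inE => /eqP->; rewrite discordant_mulE.
- by apply/allP=> f' /subFb; rewrite inE => /eqP->; rewrite -{2}[g]mul1g discordant_mulr.
- by apply/allP=> f' /subFc; rewrite inE => /eqP->; rewrite discordant_mulE invgK.
- by rewrite mulgA discordant_mulr discordant_mull.
- by rewrite !mulgA mulgV mul1g discordant_mulr discordantC.
- have -> : t * (s^-1 * gamma * g) = r * (r^-1 * t * s^-1 * gamma) * g by rewrite -!mulgA mulVKg.
  by rewrite discordant_mulr discordant_mull.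
Qed.

End S4Core.

(** * Sub-covers and monotonicity of packability *)

Section Cover.
Variables (V W : finType) (e : rel V) (h : rel W) (L : V -> {set W}).
Hypothesis Hcov : is_cover e h L.

Lemma cover_sym : symmetric h.
Proof. by case: Hcov => [[]]. Qed.

Lemma cover_irr : irreflexive h.
Proof. by case: Hcov => [[]]. Qed.

Lemma cover_uniq u v w : w \in L u -> w \in L v -> u = v.
Proof.
case: Hcov => _ [_ disj] _ _ _ wu wv; apply/eqP; apply: contraT => /disj.
by move/disjointFr/(_ wu); rewrite wv.
Qed.

Lemma cover_nonadj u v x y : u != v -> ~~ e u v -> x \in L u -> y \in L v -> ~~ h x y.
Proof. by case: Hcov => _ _ _ H _; apply: H. Qed.

Lemma cover_matching u v x y y' :
  e u v -> x \in L u -> y \in L v -> y' \in L v -> h x y -> h x y' -> y = y'.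
Proof.
case: Hcov => _ _ _ _ H euv xu yv y'v hy hy'.
by apply: (card_le1_eqP (H _ _ _ euv xu)); rewrite inE ?yv ?y'v.
Qed.

End Cover.

Section SubCover.
Variables (V V' W : finType) (e : rel V) (h : rel W) (L : V -> {set W}).
Variables (f : V' -> V) (L' : V' -> {set W}).
Hypotheses (f_inj : injective f) (L'_sub : forall v, L' v \subset L (f v)).
Hypothesis Hcov : is_cover e h L.

Let support := \bigcup_v L' v.
Let W' := {w : W | w \in support}.
Let h' : rel W' := fun x y => h (val x) (val y).
Let Lsub (v : V') : {set W'} := [set w | val w \in L' v].

Let val_Lsub v : val @: Lsub v = L' v.
Proof.
apply/setP => w; apply/imsetP/idP => [[x]|wL]; first by rewrite inE => xL ->.
have wS : w \in support by apply/bigcupP; exists v.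
by exists (exist _ w wS); rewrite ?inE.
Qed.

Let in_L v w : w \in L' v -> w \in L (f v).
Proof. exact: subsetP. Qed.

Let in_Lsub v (x : W') : (val x \in L (f v)) = (x \in Lsub v).
Proof.
rewrite inE; apply/idP/idP => [xv|/in_L //].
by case/bigcupP: (valP x) => u _ xu; rewrite -(f_inj (cover_uniq Hcov (in_L xu) xv)).
Qed.

Let subcover : is_cover (fun x y => e (f x) (f y)) h' Lsub.
Proof.
split.
- by split=> [x y|x]; [apply: (cover_sym Hcov) | apply: (cover_irr Hcov)].
- split=> [[w wS]|u v nuv]; first by case/bigcupP: (wS) => v _ wv; exists v; rewrite inE.
  rewrite -setI_eq0; apply/eqP/setP => x; rewrite !inE.
  apply/negP => /andP[/in_L xu /in_L xv].
  by move: nuv; rewrite (f_inj (cover_uniq Hcov xu xv)) eqxx.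
- move=> v x y; rewrite !inE /h' => /in_L xv /in_L yv nxy.
  case: Hcov => _ _ H _ _; apply: (H _ _ _ xv yv).
  by apply: contra nxy => /eqP/val_inj->.
- move=> u v x y nuv neuv; rewrite !inE /h' => /in_L xu /in_L yv.
  by apply: (cover_nonadj Hcov _ neuv xu yv); apply: contra nuv => /eqP/f_inj->.
- move=> u v x euv; rewrite inE => /in_L xu; rewrite -(card_imset _ val_inj).
  case: Hcov => _ _ _ _ H; apply: leq_trans (H _ _ _ euv xu).
  apply/subset_leq_card/subsetP => w /imsetP[y]; rewrite !inE /h' => /andP[/in_L yv hy] ->.
  by rewrite yv hy.
Qed.

Lemma subcover_packing k : (forall v, #|L' v| = k) ->
  every_cover_packs (fun x y => e (f x) (f y)) k ->
  exists t : 'I_k -> {set W},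
    [/\ (forall i x y, x \in t i -> y \in t i -> ~~ h x y),
        (forall i v, #|t i :&: L (f v)| = 1),
        (forall i j, i != j -> [disjoint t i & t j]) &
        (forall i, t i \subset support)].
Proof.
move=> L'k /(_ _ _ _ subcover) []; first by move=> v; rewrite -(card_imset _ val_inj) val_Lsub.
move=> t [tr disj]; exists (fun i => val @: t i); split.
- by move=> i _ _ /imsetP[x xt ->] /imsetP[y yt ->]; case: (tr i) => H _; apply: H.
- move=> i v; case: (tr i) => _ /(_ v) <-; rewrite -(card_imset _ val_inj).
  apply: eq_card => w; rewrite inE; apply/andP/imsetP => [[/imsetP[x xt ->] xv]|[x]].
    by exists x; rewrite // inE xt -in_Lsub.
  by rewrite inE -in_Lsub => /andP[xt xv] ->; split; first exact: imset_f.
- move=> i j /disj; rewrite -!setI_eq0 -imsetI ?imset_eq0 // => x y _ _; exact: val_inj.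
- by move=> i; apply/subsetP => w /imsetP[x _ ->]; apply: valP.
Qed.

End SubCover.

Lemma every_cover_packs_succ (V : finType) (e : rel V) k :
  0 < k -> every_cover_packs e k -> every_cover_packs e k.+1.
Proof.
(* A k-fold sub-cover yields one transversal I0, and the k-fold cover L :\: I0 packs. *)
move=> k_gt0 packs W h L Hcov Lk.
pose L1 v := if [pick x in L v] is Some x then L v :\ x else L v.
have L1_sub v : L1 v \subset L v by rewrite /L1; case: pickP => [x _|_]; rewrite ?subsetDl.
have L1k v : #|L1 v| = k.
  rewrite /L1; case: pickP => [x xL|none]; first by move: (Lk v); rewrite (cardsD1 x) xL => -[].
  by move: (Lk v); rewrite (eq_card0 none).
have [t1 [indep1 meet1 _ _]] := subcover_packing (@inj_id V) L1_sub Hcov L1k packs.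
pose I0 := t1 (Ordinal k_gt0).
have L2k v : #|L v :\: I0| = k by rewrite cardsD setIC meet1 Lk subn1.
have [t2 [indep2 meet2 disj2 sub2]] :=
  subcover_packing (@inj_id V) (fun v => subsetDl (L v) I0) Hcov L2k packs.
have t2_I0 j : [disjoint t2 j & I0].
  apply/pred0P => w /=; apply/negP => /andP[/(subsetP (sub2 j))/bigcupP[v _]].
  by rewrite inE => /andP[/negbTE->].
exists (fun i => if unlift ord_max i is Some j then t2 j else I0); split.
- move=> i; case: unliftP => [j _|_]; split.
  + exact: indep2.
  + exact: meet2.
  + exact: indep1.
  + exact: meet1.
- move=> i i' ii'; case: unliftP => [j Ei|Ei]; case: unliftP => [j' Ei'|Ei'].
  + by apply: disj2; apply: contraNneq ii' => jj'; rewrite Ei Ei' jj'.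
  + exact: t2_I0.
  + by rewrite disjoint_sym.
  + by rewrite Ei Ei' eqxx in ii'.
Qed.

Lemma every_cover_packs_le (V : finType) (e : rel V) j k :
  0 < j -> j <= k -> every_cover_packs e j -> every_cover_packs e k.
Proof.
move=> j_gt0 /subnK <-; elim: (k - j) => [//|n IH] packs.
by rewrite addSn; apply: every_cover_packs_succ (IH packs); rewrite ltn_addl.
Qed.

Lemma packing_outside (V W : finType) (e : rel V) (h : rel W) (L : V -> {set W})
    (T : {set V}) k :
  is_cover e h L -> kfold L k -> every_cover_packs (del_rel e T) k ->
  exists t : 'I_k -> {set W},
    [/\ (forall i x y, x \in t i -> y \in t i -> ~~ h x y),
        (forall i u, u \notin T -> #|t i :&: L u| = 1),
        (forall i j, i != j -> [disjoint t i & t j]) &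
        (forall i w, w \in t i -> exists2 u, u \notin T & w \in L u)].
Proof.
move=> Hcov Lk packs.
have [t [indep meet disj sub]] := subcover_packing (f := val : del_vert T -> V)
  (L' := fun v => L (val v)) val_inj (fun v => subxx _) Hcov (fun v => Lk _) packs.
exists t; split=> // [i u uT|i w /(subsetP (sub i))/bigcupP[v _ wv]].
  exact: (meet i (exist (fun x => x \notin T) u uT)).
by exists (val v); first exact: (valP v).
Qed.

(** * Extending a packing of G \ T over T *)

Section Extension.
Variables (V W : finType) (e : rel V) (h : rel W) (L : V -> {set W}).
Variables (T : {set V}) (t0 : 'I_4 -> {set W}).
Hypotheses (e_sym : symmetric e) (Hcov : is_cover e h L) (L4 : kfold L 4).
Hypothesis t0_indep : forall i x y, x \in t0 i -> y \in t0 i -> ~~ h x y.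
Hypothesis t0_meet : forall i u, u \notin T -> #|t0 i :&: L u| = 1.
Hypothesis t0_disj : forall i j, i != j -> [disjoint t0 i & t0 j].
Hypothesis t0_out : forall i w, w \in t0 i -> exists2 u, u \notin T & w \in L u.

Definition label x (p : 'I_4) : W := enum_val (cast_ord (esym (L4 x)) p).

Lemma label_in x p : label x p \in L x.
Proof. exact: enum_valP. Qed.

Lemma label_inj x : injective (label x).
Proof. by move=> p q /enum_val_inj/cast_ord_inj. Qed.

Definition outer_nbrs x := [set u | e x u & u \notin T].

Definition conflict x u : rel 'I_4 :=
  fun p i => [exists y in t0 i :&: L u, h (label x p) y].

Definition forbidden x : seq 'S_4 :=
  [seq perm_extension (conflict x u) | u <- enum (outer_nbrs x)].

Definition edge_perm x y : 'S_4 := perm_extension (fun p q => h (label x p) (label y q)).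

Lemma conflict_partial_injection x u : e x u -> u \notin T -> partial_injection (conflict x u).
Proof.
move=> exu uT; split=> [p i j|p q i] /exists_inP[y] /setIP[yi yu] hy
  /exists_inP[y'] /setIP[y'j y'u] hy'.
  have yy' := cover_matching Hcov exu (label_in x p) yu y'u hy hy'.
  by apply/eqP; apply: contraT => /t0_disj/disjointFr/(_ yi); rewrite yy' y'j.
have yy' : y = y' by apply: (card_le1_eqP (eq_leq (t0_meet i uT))); apply/setIP.
rewrite -yy' (cover_sym Hcov) in hy'; rewrite (cover_sym Hcov) in hy.
have eux : e u x by rewrite e_sym.
exact: (@label_inj x _ _ (cover_matching Hcov eux yu (label_in x p) (label_in x q) hy hy')).
Qed.

Lemma edge_partial_injection x y :
  e x y -> partial_injection (fun p q => h (label x p) (label y q)).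
Proof.
move=> exy; split=> [p q q'|p p' q] h1 h2.
  exact: (@label_inj y _ _
    (cover_matching Hcov exy (label_in x p) (label_in y q) (label_in y q') h1 h2)).
rewrite (cover_sym Hcov) in h1; rewrite (cover_sym Hcov) in h2.
have eyx : e y x by rewrite e_sym.
exact: (@label_inj x _ _
  (cover_matching Hcov eyx (label_in y q) (label_in x p) (label_in x p') h1 h2)).
Qed.

Definition separated (sx sy : 'S_4) x y :=
  forall p q, h (label x p) (label y q) -> sx p != sy q.

Definition clear_of_t0 (sx : 'S_4) x := forall p w, w \in t0 (sx p) -> ~~ h (label x p) w.

Lemma clear_of_t0_forbidden sx x :
  x \in T -> all (discordant sx) (forbidden x) -> clear_of_t0 sx x.
Proof.
move=> xT /allP disc p w wt; have [u uT wu] := t0_out wt.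
have [exu|nexu] := boolP (e x u); last first.
  have nxu : x != u by apply: contraNneq uT => <-.
  exact: (cover_nonadj Hcov nxu nexu (label_in x p) wu).
apply/negP => hw.
have /forallP/(_ p) : discordant sx (perm_extension (conflict x u)).
  by apply: disc; apply: map_f; rewrite mem_enum inE exu uT.
have cxu : conflict x u p (sx p) by apply/exists_inP; exists w; rewrite ?inE ?wt.
by rewrite (perm_extensionE (conflict_partial_injection exu uT) cxu) eqxx.
Qed.

Lemma separated_edge sx sy x y :
  e x y -> discordant sx (edge_perm x y * sy)%g -> separated sx sy x y.
Proof.
move=> exy /forallP disc p q hpq.
by move: (disc p); rewrite permM (perm_extensionE (edge_partial_injection exy) hpq).
Qed.

Lemma separated_nonadj sx sy x y : x != y -> ~~ e x y -> separated sx sy x y.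
Proof.
move=> nxy nexy p q hpq.
by move: (cover_nonadj Hcov nxy nexy (label_in x p) (label_in y q)); rewrite hpq.
Qed.

Lemma separated_sym sx sy x y : separated sx sy x y -> separated sy sx y x.
Proof. by move=> sep p q hpq; rewrite eq_sym; apply: sep; rewrite (cover_sym Hcov). Qed.

Section Assemble.
(* The colour label x p of x goes to the transversal of index sg x p. *)
Variable sg : V -> 'S_4.
Hypothesis sg_clear : forall x, x \in T -> clear_of_t0 (sg x) x.
Hypothesis sg_sep : forall x y, x \in T -> y \in T -> x != y -> separated (sg x) (sg y) x y.

Definition extended_transversal (i : 'I_4) : {set W} :=
  t0 i :|: [set label x ((sg x)^-1 i)%g | x in T].

Let t0_outside i w x : w \in t0 i -> w \in L x -> x \notin T.
Proof. by move=> wt wx; have [u uT wu] := t0_out wt; rewrite -(cover_uniq Hcov wu wx). Qed.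

Let sgK x i : sg x ((sg x)^-1 i)%g = i.
Proof. exact: permKV. Qed.

Lemma extended_transversalP i w : w \in extended_transversal i ->
  w \in t0 i \/ exists2 x, x \in T & w = label x ((sg x)^-1 i)%g.
Proof. by rewrite inE => /orP[|/imsetP[x xT ->]]; [left | right; exists x]. Qed.

Lemma extended_transversal_indep i w w' :
  w \in extended_transversal i -> w' \in extended_transversal i -> ~~ h w w'.
Proof.
have clear x y : x \in T -> y \in t0 i -> ~~ h (label x ((sg x)^-1 i)%g) y.
  by move=> xT yt; apply: sg_clear; rewrite // sgK.
move=> /extended_transversalP[wt|[x xT ->]] /extended_transversalP[w't|[y yT ->]].
- exact: t0_indep wt w't.
- by rewrite (cover_sym Hcov) clear.
- exact: clear.
- have [<-|nxy] := eqVneq x y; first by rewrite (cover_irr Hcov).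
  by apply: contraL (eqxx i) => /(sg_sep xT yT nxy); rewrite !sgK.
Qed.

Lemma extended_transversal_meet i v : #|extended_transversal i :&: L v| = 1.
Proof.
have [vT|vT] := boolP (v \in T).
  rewrite -(cards1 (label v ((sg v)^-1 i)%g)); apply: eq_card => w; rewrite in_setI in_set1.
  apply/andP/eqP => [[/extended_transversalP[wt|[x xT ->]] wv]|->].
  - by move: vT; rewrite (negbTE (t0_outside wt wv)).
  - by rewrite (cover_uniq Hcov (label_in x _) wv).
  - by split; [rewrite inE; apply/orP; right; apply: imset_f | apply: label_in].
rewrite -(t0_meet i vT); apply: eq_card => w; rewrite !in_setI.
apply/andP/andP => [[/extended_transversalP[wt|[x xT ->]] wv]|[wt wv]] //.
- by move: xT; rewrite (cover_uniq Hcov (label_in x _) wv) (negbTE vT).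
- by rewrite inE wt.
Qed.

Lemma extended_transversal_disjoint i j :
  i != j -> [disjoint extended_transversal i & extended_transversal j].
Proof.
move=> ij; apply/pred0P => w /=; apply/negP.
case/andP=> /extended_transversalP[wi|[x xT ->]] /extended_transversalP[wj|[y yT E]].
- by move/disjointFr: (t0_disj ij) => /(_ _ wi); rewrite wj.
- by move: yT; rewrite E in wi; rewrite (negbTE (t0_outside wi (label_in _ _))).
- by move: xT; rewrite (negbTE (t0_outside wj (label_in _ _))).
- have xy : x = y by apply: (cover_uniq Hcov (label_in x ((sg x)^-1 i)%g)); rewrite E label_in.
  move: E; rewrite xy => /(@label_inj y)/(congr1 (sg y)); rewrite !sgK => ij'.
  by rewrite ij' eqxx in ij.
Qed.

Lemma packing_of_extension : has_packing h L 4.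
Proof.
exists extended_transversal; split=> [i|]; last exact: extended_transversal_disjoint.
by split=> [w w'|v]; [exact: extended_transversal_indep | exact: extended_transversal_meet].
Qed.

End Assemble.

Lemma forbidden_size x (A : {set V}) : A \subset [set y in T | e x y] ->
  size (forbidden x) + #|A| <= #|[set y | e x y]|.
Proof.
move=> sA; rewrite size_map -cardE -cardsUI.
rewrite (_ : outer_nbrs x :&: A = set0) ?cards0 ?addn0.
  apply/subset_leq_card/subsetP => y; rewrite !inE => /orP[/andP[-> _] //|/(subsetP sA)].
  by rewrite inE => /andP[].
apply/setP => y; rewrite !inE; apply/negP => /andP[/andP[_ yT] /(subsetP sA)].
by rewrite inE (negbTE yT).
Qed.

Section Triple.
Variables a b c : V.
Hypotheses (HT : T = [set a; b; c]) (abc : uniq [:: a; b; c]) (eab : e a b) (ebc : e b c).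
Hypothesis deg3 : forall x, x \in T -> #|[set y | e x y]| = 3.

Let forbidden_le2 x y : x \in T -> y \in T -> e x y -> size (forbidden x) <= 2.
Proof.
move=> xT yT exy; have := @forbidden_size x [set y]; rewrite cards1 deg3 // addn1 ltnS; apply.
by apply/subsetP => z /set1P->; rewrite inE yT exy.
Qed.

Let forbidden_le1 x y z : x \in T -> y \in T -> z \in T -> y != z -> e x y -> e x z ->
  size (forbidden x) <= 1.
Proof.
move=> xT yT zT yz exy exz; have := @forbidden_size x [set y; z].
rewrite cards2 yz deg3 // addn2 !ltnS; apply.
by apply/subsetP => w; rewrite !inE => /orP[]/eqP->; rewrite ?yT ?zT ?exy ?exz.
Qed.

Let aT : a \in T. Proof. by rewrite HT !inE eqxx. Qed.
Let bT : b \in T. Proof. by rewrite HT !inE eqxx orbT. Qed.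
Let cT : c \in T. Proof. by rewrite HT !inE eqxx orbT. Qed.
Let ab : a != b. Proof. by move: abc; rewrite /= !inE negb_or => /andP[/andP[]]. Qed.
Let ac : a != c. Proof. by move: abc; rewrite /= !inE negb_or => /andP[/andP[]]. Qed.
Let bc : b != c. Proof. by move: abc; rewrite /= !inE negb_or andbT => /andP[_]. Qed.

Lemma packing_of_triple (sa sb sc : 'S_4) :
  all (discordant sa) (forbidden a) -> all (discordant sb) (forbidden b) ->
  all (discordant sc) (forbidden c) ->
  separated sa sb a b -> separated sb sc b c -> separated sa sc a c -> has_packing h L 4.
Proof.
move=> Fa Fb Fc sep_ab sep_bc sep_ac.
pose sg x := if x == a then sa else if x == b then sb else sc.
have [sga sgb sgc] : [/\ sg a = sa, sg b = sb & sg c = sc].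
  by rewrite /sg eqxx eq_sym (negbTE ab) eqxx eq_sym (negbTE ac) eq_sym (negbTE bc).
apply: (packing_of_extension (sg := sg)) => [x|x y]; rewrite HT !inE.
  move=> /orP[/orP[]|]/eqP->; rewrite ?sga ?sgb ?sgc; apply: clear_of_t0_forbidden;
    by rewrite // HT !inE eqxx ?orbT.
move=> /orP[/orP[]|]/eqP-> /orP[/orP[]|]/eqP->; rewrite ?eqxx //= ?sga ?sgb ?sgc => _;
  by [|apply: separated_sym].
Qed.

Lemma packing_of_path : ~~ e a c -> has_packing h L 4.
Proof.
move=> nac; have eba : e b a by rewrite e_sym.
have ecb : e c b by rewrite e_sym.
have [sa [sb [sc [Fa Fb Fc sep_ab sep_bc]]]] := S4_path (edge_perm a b) (edge_perm b c)
  (forbidden_le2 aT bT eab) (forbidden_le1 bT aT cT ac eba ebc) (forbidden_le2 cT bT ecb).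
apply: (packing_of_triple Fa Fb Fc); [exact: separated_edge eab sep_ab |
  exact: separated_edge ebc sep_bc | exact: separated_nonadj ac nac].
Qed.

Lemma packing_of_triangle : e a c -> has_packing h L 4.
Proof.
move=> eac; have eba : e b a by rewrite e_sym.
have eca : e c a by rewrite e_sym.
have ecb : e c b by rewrite e_sym.
have [sa [sb [sc [Fa Fb Fc sep_ab [sep_bc sep_ac]]]]] := S4_triangle
  (edge_perm a b) (edge_perm b c) (edge_perm a c) (forbidden_le1 aT bT cT bc eab eac)
  (forbidden_le1 bT aT cT ac eba ebc) (forbidden_le1 cT aT bT ab eca ecb).
apply: (packing_of_triple Fa Fb Fc); [exact: separated_edge eab sep_ab |
  exact: separated_edge ebc sep_bc | exact: separated_edge eac sep_ac].
Qed.

End Triple.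

End Extension.

Theorem mainTheorem6 (V : finType) (e : rel V) (He : simple_graph e)
    (a b c : V) :
  uniq [:: a; b; c] ->
  e a b -> e b c ->
  (~~ e a c \/ e a c) ->
  (forall x, x \in [set a; b; c] -> #|[set y | e x y]| = 3) ->
  chi_c_star_le (del_rel e [set a; b; c]) 4 ->
  chi_c_star_le e 4.
Proof.
move=> abc eab ebc ac deg3 [j /andP[j_gt0 j_le4] packs]; exists 4 => // W h L Hcov L4.
have [t0 [t0_indep t0_meet t0_disj t0_out]] :=
  packing_outside Hcov L4 (every_cover_packs_le j_gt0 j_le4 packs).
have [e_sym _] := He.
case: ac => [nac|eac].
  exact: (packing_of_path e_sym Hcov L4 t0_indep t0_meet t0_disj t0_out
            (erefl _) abc eab ebc deg3 nac).
exact: (packing_of_triangle e_sym Hcov L4 t0_indep t0_meet t0_disj t0_out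
          (erefl _) abc eab ebc deg3 eac).
Qed.
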